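(* Fix $\delta>0$, and for $r\in\mathbb R$ let $\mathrm A_r(\xi):=e^{\delta\langle\xi\rangle^{1/2}}\langle\xi\rangle^r$ for $\xi\in\mathbb R$. Let $s\ge1$ and $c\in(0,1)$. Then, for $\xi,\eta\in\mathbb R$: (i) if $|\xi-\eta|\le c|\eta|$, then $|\mathrm A_s(\xi)-\mathrm A_s(\eta)|\lesssim\mathrm A_{s-\frac34}(\eta)\,\mathrm A_1(\xi-\eta)\,\langle\xi\rangle^{\frac14}$; (ii) if $|\eta|\le c|\xi-\eta|$, then $|\mathrm A_s(\xi)-\mathrm A_s(\eta)|\lesssim\mathrm A_0(\eta)\,\mathrm A_s(\xi-\eta)$; (iii) if $c|\eta|\le|\xi-\eta|\le c^{-1}|\eta|$, then $|\mathrm A_s(\xi)-\mathrm A_s(\eta)|\lesssim\mathrm A_{s-1}(\eta)\,\mathrm A_1(\xi-\eta)$.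
   Context: $\langle\xi\rangle=(1+|\xi|^2)^{1/2}$. Implicit constants may depend on $s$, $c$ and $\delta$ but not on $\xi,\eta$. *)

From Stdlib Require Import Reals.
Open Scope R_scope.

Definition jb (x : R) : R := sqrt (1 + x ^ 2).

(* A_r(xi) = exp(delta * <xi>^{1/2}) * <xi>^r, with real exponent r
   (<xi> >= 1 > 0, so Rpower is the usual power). *)
Definition Aw (delta r xi : R) : R :=
  exp (delta * sqrt (jb xi)) * Rpower (jb xi) r.

From Stdlib Require Import Reals Lra Psatz.
Open Scope R_scope.

(* Write A_r(x) = exp (phase delta r <x>), where phase delta r t = delta sqrt t + r ln t.
   The weight exp (delta sqrt <.>) is submultiplicative because
   sqrt <xi> <= sqrt <eta> + sqrt <xi - eta>, and each case hypothesis makes the relevant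
   brackets comparable.  In cases (ii) and (iii) no cancellation is needed: A_s(xi) and
   A_s(eta) are bounded separately.  In case (i) the mean value theorem for exp gives
   |A_s(xi) - A_s(eta)| <= (A_s(xi) + A_s(eta)) |phase <xi> - phase <eta>|; since
   phase' t <~ t^(-1/2) and |<xi> - <eta>| <= <xi - eta>, this gains <xi - eta> <eta>^(-1/2),
   which is at most a constant times <xi - eta> <eta>^(-3/4) <xi>^(1/4). *)

Lemma exp_le x y : x <= y -> exp x <= exp y.
Proof. intros [Hlt | ->]; [left; apply exp_increasing |]; lra. Qed.

Lemma ln_le x y : 0 < x -> x <= y -> ln x <= ln y.
Proof. intros Hx [Hlt | ->]; [left; apply ln_increasing |]; lra. Qed.

Lemma ln_le_of_le_mul x y K : 0 < x -> 0 < y -> 0 < K -> x <= K * y -> ln x <= ln K + ln y.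
Proof. intros Hx Hy HK Hxy; rewrite <- ln_mult by lra; now apply ln_le. Qed.

Lemma sqrt_exp_ln b : 0 < b -> sqrt b = exp (ln b / 2).
Proof. intros Hb; rewrite <- Rpower_sqrt by exact Hb; unfold Rpower; f_equal; field. Qed.

Lemma sqrt_le_add a b d : 0 <= b -> 0 <= d -> a <= b + d -> sqrt a <= sqrt b + sqrt d.
Proof.
  intros Hb Hd Ha.
  pose proof (sqrt_pos b); pose proof (sqrt_pos d).
  rewrite <- (sqrt_square (sqrt b + sqrt d)) by lra.
  apply sqrt_le_1_alt.
  pose proof (sqrt_sqrt b Hb); pose proof (sqrt_sqrt d Hd); nra.
Qed.

Lemma Rabs_le_add_sub x y : Rabs x <= Rabs y + Rabs (x - y).
Proof. replace x with (y + (x - y)) at 1 by ring; apply Rabs_triang. Qed.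

Lemma exp_Rmax_le_add u v : exp (Rmax u v) <= exp u + exp v.
Proof.
  pose proof (exp_pos u); pose proof (exp_pos v).
  unfold Rmax; destruct (Rle_dec u v); lra.
Qed.

Lemma Rabs_exp_sub_le u v : Rabs (exp u - exp v) <= exp (Rmax u v) * Rabs (u - v).
Proof.
  destruct (MVT_abs exp exp v u) as [t [Ht [Hmin Hmax]]].
  { intros t _; apply derivable_pt_lim_exp. }
  rewrite Ht, Rabs_right by (left; apply exp_pos).
  apply Rmult_le_compat_r; [apply Rabs_pos |].
  apply exp_le; rewrite Rmax_comm; lra.
Qed.

Lemma Rabs_ln_sub_le a b m :
  0 < m -> m <= a -> m <= b -> Rabs (ln a - ln b) <= Rabs (a - b) / m.
Proof.
  intros Hm Ha Hb.
  assert (Hmin : m <= Rmin b a) by now apply Rmin_glb.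
  destruct (MVT_abs ln Rinv b a) as [t [Ht [Htmin _]]].
  { intros t [Ht _]; apply derivable_pt_lim_ln; lra. }
  rewrite Ht, Rabs_right by (left; apply Rinv_0_lt_compat; lra).
  unfold Rdiv; rewrite Rmult_comm.
  apply Rmult_le_compat_l; [apply Rabs_pos |].
  apply Rinv_le_contravar; lra.
Qed.

Lemma Rabs_sqrt_sub_le a b :
  0 <= a -> 0 < b -> Rabs (sqrt a - sqrt b) <= Rabs (a - b) / sqrt b.
Proof.
  intros Ha Hb.
  pose proof (sqrt_lt_R0 b Hb); pose proof (sqrt_pos a).
  assert (Hfact : a - b = (sqrt a - sqrt b) * (sqrt a + sqrt b)).
  { pose proof (sqrt_sqrt a Ha); pose proof (sqrt_sqrt b (Rlt_le _ _ Hb)); nra. }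
  apply (Rmult_le_reg_r (sqrt b)); [lra |].
  unfold Rdiv; rewrite Rmult_assoc, Rinv_l, Rmult_1_r by lra.
  rewrite Hfact, Rabs_mult, (Rabs_right (sqrt a + sqrt b)) by lra.
  apply Rmult_le_compat_l; [apply Rabs_pos | lra].
Qed.

Lemma Rabs_exp_sub_le_of_bounds U V E K1 K2 :
  U <= K1 + E -> V <= K2 + E -> Rabs (exp U - exp V) <= (exp K1 + exp K2) * exp E.
Proof.
  intros HU HV.
  pose proof (exp_le _ _ HU); pose proof (exp_le _ _ HV).
  pose proof (exp_pos U); pose proof (exp_pos V).
  rewrite exp_plus in *; apply Rabs_le; lra.
Qed.

Lemma Rabs_exp_sub_le_of_exponents U V E W F K1 K2 K3 L :
  U <= K1 + E -> V <= K2 + E -> Rabs (U - V) <= L * exp W -> E + W <= K3 + F ->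
  Rabs (exp U - exp V) <= (exp K1 + exp K2) * L * exp K3 * exp F.
Proof.
  intros HU HV HUV HEW.
  assert (Hmax : exp (Rmax U V) <= (exp K1 + exp K2) * exp E).
  { eapply Rle_trans; [apply exp_Rmax_le_add |].
    pose proof (exp_le _ _ HU); pose proof (exp_le _ _ HV).
    rewrite !exp_plus in *; lra. }
  assert (HL : 0 <= L).
  { pose proof (Rabs_pos (U - V)); pose proof (exp_pos W); nra. }
  assert (HEWF : exp E * exp W <= exp K3 * exp F) by (rewrite <- !exp_plus; now apply exp_le).
  eapply Rle_trans; [apply Rabs_exp_sub_le |].
  eapply Rle_trans.
  { apply Rmult_le_compat; [left; apply exp_pos | apply Rabs_pos | exact Hmax | exact HUV]. }
  replace ((exp K1 + exp K2) * exp E * (L * exp W))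
    with ((exp K1 + exp K2) * L * (exp E * exp W)) by ring.
  rewrite (Rmult_assoc _ (exp K3)).
  apply Rmult_le_compat_l; [| exact HEWF].
  pose proof (exp_pos K1); pose proof (exp_pos K2); nra.
Qed.

Lemma Rle_mult_const_r X Y C C' : 0 <= Y -> C <= C' -> X <= C * Y -> X <= C' * Y.
Proof. intros HY HC HX; eapply Rle_trans; [exact HX |]; now apply Rmult_le_compat_r. Qed.

Lemma jb_sq x : jb x * jb x = 1 + x ^ 2.
Proof. apply sqrt_sqrt; nra. Qed.

Lemma jb_ge_1 x : 1 <= jb x.
Proof. rewrite <- sqrt_1; apply sqrt_le_1_alt; nra. Qed.

Lemma jb_pos x : 0 < jb x.
Proof. pose proof (jb_ge_1 x); lra. Qed.

Lemma Rabs_le_jb x : Rabs x <= jb x.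
Proof. rewrite <- sqrt_Rsqr_abs; apply sqrt_le_1_alt; unfold Rsqr; nra. Qed.

Lemma jb_le_of_sq x u : 0 <= u -> 1 + x ^ 2 <= u * u -> jb x <= u.
Proof. intros Hu H; rewrite <- (sqrt_square u Hu); now apply sqrt_le_1_alt. Qed.

Lemma jb_add_le x y : jb (x + y) <= jb x + Rabs y.
Proof.
  pose proof (jb_sq x); pose proof (jb_pos x).
  pose proof (Rabs_pos y); pose proof (pow2_abs y).
  assert (Hxy : x * y <= jb x * Rabs y).
  { apply (Rle_trans _ (Rabs x * Rabs y)).
    - rewrite <- Rabs_mult; apply Rle_abs.
    - apply Rmult_le_compat_r; [lra | apply Rabs_le_jb]. }
  apply jb_le_of_sq; nra.
Qed.

Lemma Rabs_jb_sub_le x y : Rabs (jb x - jb y) <= Rabs (x - y).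
Proof.
  pose proof (jb_add_le y (x - y)); pose proof (jb_add_le x (y - x)).
  replace (y + (x - y)) with x in * by ring.
  replace (x + (y - x)) with y in * by ring.
  rewrite (Rabs_minus_sym y x) in *; apply Rabs_le; lra.
Qed.

Lemma jb_le_add_sub x y : jb x <= jb y + jb (x - y).
Proof.
  pose proof (Rabs_jb_sub_le x y); pose proof (Rabs_le_jb (x - y)).
  pose proof (Rle_abs (jb x - jb y)); lra.
Qed.

Lemma jb_le_scale k x y : 1 <= k -> Rabs x <= k * Rabs y -> jb x <= k * jb y.
Proof.
  intros Hk Hxy.
  pose proof (jb_sq y); pose proof (jb_ge_1 y); pose proof (Rabs_pos x).
  pose proof (pow2_abs x); pose proof (pow2_abs y).
  apply jb_le_of_sq; nra.
Qed.

Definition phase (delta r t : R) : R := delta * sqrt t + r * ln t.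

Lemma Aw_phase delta r x : Aw delta r x = exp (phase delta r (jb x)).
Proof. unfold Aw, Rpower, phase; now rewrite exp_plus. Qed.

Lemma Aw_pos delta r x : 0 < Aw delta r x.
Proof. rewrite Aw_phase; apply exp_pos. Qed.

Lemma phase_sub_le delta r K a b :
  0 <= delta -> 0 <= r -> 1 <= K -> 1 <= b -> b <= K * a ->
  Rabs (phase delta r a - phase delta r b) <= (delta + r * K) * (Rabs (a - b) / sqrt b).
Proof.
  intros Hdelta Hr HK Hb Hba.
  set (t := Rabs (a - b) / sqrt b).
  assert (Ha : 0 < a) by nra.
  assert (Hsqrt : Rabs (sqrt a - sqrt b) <= t) by (apply Rabs_sqrt_sub_le; lra).
  assert (Hsqrt_b : 1 <= sqrt b <= b).
  { rewrite <- sqrt_1; split; [now apply sqrt_le_1_alt |].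
    pose proof (sqrt_sqrt b); pose proof (sqrt_pos b); nra. }
  assert (Hln : Rabs (ln a - ln b) <= K * t).
  { set (m := b / K).
    assert (Hm : m * K = b) by (unfold m; field; lra).
    eapply Rle_trans; [apply (Rabs_ln_sub_le a b m); nra |].
    replace (Rabs (a - b) / m) with (K * (Rabs (a - b) / b)) by (unfold m; field; lra).
    apply Rmult_le_compat_l; [lra |].
    apply Rmult_le_compat_l; [apply Rabs_pos |].
    apply Rinv_le_contravar; lra. }
  unfold phase.
  replace (delta * sqrt a + r * ln a - (delta * sqrt b + r * ln b))
    with (delta * (sqrt a - sqrt b) + r * (ln a - ln b)) by ring.
  eapply Rle_trans; [apply Rabs_triang |].
  rewrite !Rabs_mult, (Rabs_pos_eq delta), (Rabs_pos_eq r) by lra.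
  pose proof (Rmult_le_compat_l _ _ _ Hdelta Hsqrt).
  pose proof (Rmult_le_compat_l _ _ _ Hr Hln).
  lra.
Qed.

Section Aw_difference.

Variables delta s c : R.
Hypothesis hdelta : 0 < delta.
Hypothesis hs : 0 <= s.
Hypothesis hc0 : 0 < c.
Hypothesis hc1 : c < 1.

Lemma weight_exponent_le xi eta :
  delta * sqrt (jb xi) <= delta * sqrt (jb eta) + delta * sqrt (jb (xi - eta)).
Proof.
  rewrite <- Rmult_plus_distr_l; apply Rmult_le_compat_l; [lra |].
  apply sqrt_le_add; [left; apply jb_pos | left; apply jb_pos | apply jb_le_add_sub].
Qed.

Lemma Aw_sub_le_small_diff :
  exists C, 0 < C /\ forall xi eta, Rabs (xi - eta) <= c * Rabs eta ->
    Rabs (Aw delta s xi - Aw delta s eta)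
      <= C * (Aw delta (s - 3/4) eta * Aw delta 1 (xi - eta) * Rpower (jb xi) (1/4)).
Proof.
  set (K := / (1 - c)).
  assert (HK : 1 <= K) by (unfold K; rewrite <- Rinv_1; apply Rinv_le_contravar; lra).
  exists ((exp (s * ln (1 + c)) + exp 0) * (delta + s * K) * exp (ln K / 4)).
  split.
  { pose proof (exp_pos (s * ln (1 + c))); pose proof (exp_pos 0).
    pose proof (exp_pos (ln K / 4)).
    apply Rmult_lt_0_compat; [apply Rmult_lt_0_compat |]; nra. }
  intros xi eta Hnear.
  rewrite !Aw_phase; unfold Rpower; rewrite <- !exp_plus.
  pose proof (weight_exponent_le xi eta) as Hweight.
  assert (Hab : jb xi <= (1 + c) * jb eta).
  { apply jb_le_scale; [lra |]. pose proof (Rabs_le_add_sub xi eta); lra. }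
  assert (Hba : jb eta <= K * jb xi).
  { apply jb_le_scale; [exact HK |].
    pose proof (Rabs_le_add_sub eta xi) as Htri; rewrite Rabs_minus_sym in Htri.
    apply (Rmult_le_reg_l (1 - c)); [lra |].
    unfold K; rewrite <- Rmult_assoc, Rinv_r, Rmult_1_l by lra; lra. }
  assert (Hdist : Rabs (jb xi - jb eta) <= jb (xi - eta)).
  { eapply Rle_trans; [apply Rabs_jb_sub_le | apply Rabs_le_jb]. }
  set (a := jb xi) in *; set (b := jb eta) in *; set (d := jb (xi - eta)) in *.
  assert (Ha : 0 < a) by apply jb_pos.
  assert (Hb : 1 <= b) by apply jb_ge_1.
  assert (Hd : 0 < d) by apply jb_pos.
  assert (Hln_a : s * ln a <= s * (ln (1 + c) + ln b)).
  { apply Rmult_le_compat_l; [exact hs |]. apply ln_le_of_le_mul; lra. }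
  assert (Hln_b : ln b <= ln K + ln a) by (apply ln_le_of_le_mul; lra).
  pose proof (sqrt_pos d).
  (* exp W = d / sqrt b is the gain of the mean value step. *)
  apply Rabs_exp_sub_le_of_exponents
    with (E := delta * sqrt b + delta * sqrt d + s * ln b) (W := ln d - ln b / 2);
    unfold phase; try nra.
  eapply Rle_trans; [apply (phase_sub_le delta s K); lra |].
  apply Rmult_le_compat_l; [nra |].
  replace (ln d - ln b / 2) with (ln d + - (ln b / 2)) by ring.
  rewrite exp_plus, exp_Ropp, exp_ln, <- sqrt_exp_ln by lra.
  apply Rmult_le_compat_r; [left; apply Rinv_0_lt_compat, sqrt_lt_R0; lra | exact Hdist].
Qed.

Lemma Aw_sub_le_small_eta :
  exists C, 0 < C /\ forall xi eta, Rabs eta <= c * Rabs (xi - eta) ->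
    Rabs (Aw delta s xi - Aw delta s eta) <= C * (Aw delta 0 eta * Aw delta s (xi - eta)).
Proof.
  exists (exp (s * ln 2) + exp 0).
  split; [pose proof (exp_pos (s * ln 2)); pose proof (exp_pos 0); lra |].
  intros xi eta Hsmall.
  rewrite !Aw_phase, <- exp_plus.
  pose proof (weight_exponent_le xi eta) as Hweight.
  pose proof (jb_le_add_sub xi eta) as Hadd.
  assert (Hbd : jb eta <= 1 * jb (xi - eta)).
  { apply jb_le_scale; [lra |]. pose proof (Rabs_pos (xi - eta)); nra. }
  set (a := jb xi) in *; set (b := jb eta) in *; set (d := jb (xi - eta)) in *.
  assert (Ha : 0 < a) by apply jb_pos.
  assert (Hb : 0 < b) by apply jb_pos.
  assert (Hd : 0 < d) by apply jb_pos.
  assert (Hln_a : s * ln a <= s * (ln 2 + ln d)).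
  { apply Rmult_le_compat_l; [exact hs |]. apply ln_le_of_le_mul; lra. }
  assert (Hln_b : s * ln b <= s * (ln 1 + ln d)).
  { apply Rmult_le_compat_l; [exact hs |]. apply ln_le_of_le_mul; lra. }
  rewrite ln_1 in Hln_b.
  pose proof (sqrt_pos d).
  apply Rabs_exp_sub_le_of_bounds; unfold phase; nra.
Qed.

Lemma Aw_sub_le_comparable :
  exists C, 0 < C /\ forall xi eta, c * Rabs eta <= Rabs (xi - eta) ->
    Rabs (xi - eta) <= / c * Rabs eta ->
    Rabs (Aw delta s xi - Aw delta s eta) <= C * (Aw delta (s - 1) eta * Aw delta 1 (xi - eta)).
Proof.
  exists (exp (s * ln (1 + / c) + ln (/ c)) + exp (ln (/ c))).
  split.
  { pose proof (exp_pos (s * ln (1 + / c) + ln (/ c))); pose proof (exp_pos (ln (/ c))); lra. }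
  intros xi eta Hlow Hup.
  rewrite !Aw_phase, <- exp_plus.
  assert (Hc_inv : 1 <= / c) by (rewrite <- Rinv_1; apply Rinv_le_contravar; lra).
  pose proof (weight_exponent_le xi eta) as Hweight.
  pose proof (jb_le_add_sub xi eta) as Hadd.
  assert (Hdb : jb (xi - eta) <= / c * jb eta) by now apply jb_le_scale.
  assert (Hbd : jb eta <= / c * jb (xi - eta)).
  { apply jb_le_scale; [exact Hc_inv |].
    replace (Rabs eta) with (/ c * (c * Rabs eta)) by (field; lra).
    apply Rmult_le_compat_l; lra. }
  set (a := jb xi) in *; set (b := jb eta) in *; set (d := jb (xi - eta)) in *.
  assert (Ha : 0 < a) by apply jb_pos.
  assert (Hb : 0 < b) by apply jb_pos.
  assert (Hd : 0 < d) by apply jb_pos.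
  assert (Hln_a : s * ln a <= s * (ln (1 + / c) + ln b)).
  { apply Rmult_le_compat_l; [exact hs |]. apply ln_le_of_le_mul; nra. }
  assert (Hln_b : ln b <= ln (/ c) + ln d) by (apply ln_le_of_le_mul; lra).
  pose proof (sqrt_pos d).
  apply Rabs_exp_sub_le_of_bounds; unfold phase; nra.
Qed.

End Aw_difference.

Theorem lemma6p5 (delta s c : R) (hdelta : 0 < delta) (hs : 1 <= s)
    (hc0 : 0 < c) (hc1 : c < 1) :
  exists C : R, 0 < C /\
  (forall xi eta : R, Rabs (xi - eta) <= c * Rabs eta ->
     Rabs (Aw delta s xi - Aw delta s eta)
       <= C * (Aw delta (s - 3/4) eta * Aw delta 1 (xi - eta)
               * Rpower (jb xi) (1/4))) /\
  (forall xi eta : R, Rabs eta <= c * Rabs (xi - eta) ->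
     Rabs (Aw delta s xi - Aw delta s eta)
       <= C * (Aw delta 0 eta * Aw delta s (xi - eta))) /\
  (forall xi eta : R, c * Rabs eta <= Rabs (xi - eta) ->
     Rabs (xi - eta) <= / c * Rabs eta ->
     Rabs (Aw delta s xi - Aw delta s eta)
       <= C * (Aw delta (s - 1) eta * Aw delta 1 (xi - eta))).
Proof.
  assert (hs0 : 0 <= s) by lra.
  destruct (Aw_sub_le_small_diff delta s c) as [C1 [HC1 Hi]]; auto.
  destruct (Aw_sub_le_small_eta delta s c) as [C2 [HC2 Hii]]; auto.
  destruct (Aw_sub_le_comparable delta s c) as [C3 [HC3 Hiii]]; auto.
  exists (C1 + C2 + C3); split; [lra | split; [| split]].
  - intros xi eta Hnear.
    apply (Rle_mult_const_r _ _ C1); [| lra | now apply Hi].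
    left; apply Rmult_lt_0_compat; [apply Rmult_lt_0_compat; apply Aw_pos | apply exp_pos].
  - intros xi eta Hsmall.
    apply (Rle_mult_const_r _ _ C2); [| lra | now apply Hii].
    left; apply Rmult_lt_0_compat; apply Aw_pos.
  - intros xi eta Hlow Hup.
    apply (Rle_mult_const_r _ _ C3); [| lra | now apply Hiii].
    left; apply Rmult_lt_0_compat; apply Aw_pos.
Qed.
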